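(* Let $A$ be a ring and let $J$ be either the prime radical, the upper nilradical, or the Jacobson radical of $A$. If $\varphi: A \to A$ is a surjective ring endomorphism and $A/J$ is Hopfian, then $\ker\varphi \subseteq J$.
   Context: The prime radical of $A$ is the intersection of all prime ideals of $A$; the upper nilradical is the largest nil two-sided ideal of $A$; the Jacobson radical is the intersection of all maximal left ideals of $A$. A ring $R$ is \emph{Hopfian} if $R$ is not isomorphic (as a ring) to $R/I$ for any nonzero two-sided ideal $I \triangleleft R$; equivalently, every surjective ring endomorphism of $R$ is injective. *)

(* Rings are unital, not necessarily commutative; the zero
   ring is allowed (pzRingType). Subsets of a ring are Prop-valued predicates. *)
From HB Require Import structures.
From mathcomp Require Import all_boot all_order all_algebra.
Set Implicit Arguments. Unset Strict Implicit. Unset Printing Implicit Defensive.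
Import GRing.Theory.
Local Open Scope ring_scope.

Section RingDefs.
Variable A : pzRingType.

Definition additive_subgroup (I : A -> Prop) : Prop :=
  I 0 /\ (forall x y, I x -> I y -> I (x + y)) /\ (forall x, I x -> I (- x)).

Definition left_ideal (I : A -> Prop) : Prop :=
  additive_subgroup I /\ (forall r x, I x -> I (r * x)).

Definition two_sided_ideal (I : A -> Prop) : Prop :=
  additive_subgroup I /\ (forall r x, I x -> I (r * x))
                      /\ (forall r x, I x -> I (x * r)).

Definition proper_set (I : A -> Prop) : Prop := exists x, ~ I x.

Definition prime_ideal (P : A -> Prop) : Prop :=
  two_sided_ideal P /\ proper_set P /\
  (forall a b, (forall r, P (a * r * b)) -> P a \/ P b).

Definition maximal_left_ideal (M : A -> Prop) : Prop :=
  left_ideal M /\ proper_set M /\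
  (forall N, left_ideal N -> proper_set N -> (forall x, M x -> N x) ->
     forall x, N x -> M x).

Definition prime_radical (x : A) : Prop :=
  forall P, prime_ideal P -> P x.

Definition jacobson_radical (x : A) : Prop :=
  forall M, maximal_left_ideal M -> M x.

Definition nil_set (I : A -> Prop) : Prop :=
  forall x, I x -> exists n : nat, x ^+ n = 0.

Definition is_upper_nilradical (J : A -> Prop) : Prop :=
  two_sided_ideal J /\ nil_set J /\
  (forall I, two_sided_ideal I -> nil_set I -> forall x, I x -> J x).

End RingDefs.

Definition surjective_fun (X Y : Type) (f : X -> Y) : Prop :=
  forall y, exists x, f x = y.

Definition hopfian (R : pzRingType) : Prop :=
  forall f : {rmorphism R -> R}, surjective_fun f -> injective f.

(* A surjective endomorphism phi maps each of the three radicals J into itself: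
   preimages of prime ideals and of maximal left ideals under phi are again
   prime, resp. maximal left, and the image of a nil ideal is a nil ideal.
   Hence phi induces a surjective endomorphism psi of A/J with
   psi (x + J) = phi x + J.  If phi x = 0 then psi (x + J) = 0, so x lies in J
   as soon as A/J is Hopfian. *)
From HB Require Import structures.
From mathcomp Require Import all_boot all_order all_algebra.
Set Implicit Arguments. Unset Strict Implicit. Unset Printing Implicit Defensive.
Import GRing.Theory.
Local Open Scope ring_scope.

Definition image_set {A C : Type} (f : A -> C) (I : A -> Prop) (y : C) : Prop :=
  exists2 x, I x & f x = y.

Section IdealsAlongMorphisms.
Variables (A C : pzRingType) (f : {rmorphism A -> C}).

Lemma additive_subgroup_preimage (I : C -> Prop) :
  additive_subgroup I -> additive_subgroup (I \o f).
Proof.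
move=> [I0 [ID IN]]; split; [|split] => /=; first by rewrite rmorph0.
- by move=> x y hx hy; rewrite rmorphD; apply: ID.
- by move=> x hx; rewrite rmorphN; apply: IN.
Qed.

Lemma left_ideal_preimage (I : C -> Prop) :
  left_ideal I -> left_ideal (I \o f).
Proof.
move=> [hI IL]; split; first exact: additive_subgroup_preimage.
by move=> r x hx /=; rewrite rmorphM; apply: IL.
Qed.

Lemma two_sided_ideal_preimage (I : C -> Prop) :
  two_sided_ideal I -> two_sided_ideal (I \o f).
Proof.
move=> [hI [IL IR]]; split; first exact: additive_subgroup_preimage.
by split=> r x hx /=; rewrite rmorphM; [apply: IL | apply: IR].
Qed.

Hypothesis f_surj : surjective_fun f.

Lemma proper_set_preimage (I : C -> Prop) :
  proper_set I -> proper_set (I \o f).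
Proof. by move=> [y hy]; have [x hx] := f_surj y; exists x; rewrite /= hx. Qed.

Lemma additive_subgroup_image (I : A -> Prop) :
  additive_subgroup I -> additive_subgroup (image_set f I).
Proof.
move=> [I0 [ID IN]]; split; [|split]; first by exists 0; rewrite ?rmorph0.
- move=> _ _ [a ha <-] [b hb <-].
  by exists (a + b); [apply: ID | rewrite rmorphD].
- by move=> _ [a ha <-]; exists (- a); [apply: IN | rewrite rmorphN].
Qed.

Lemma left_ideal_image (I : A -> Prop) :
  left_ideal I -> left_ideal (image_set f I).
Proof.
move=> [hI IL]; split; first exact: additive_subgroup_image.
move=> r _ [a ha <-]; have [s <-] := f_surj r.
by exists (s * a); [apply: IL | rewrite rmorphM].
Qed.

Lemma two_sided_ideal_image (I : A -> Prop) :
  two_sided_ideal I -> two_sided_ideal (image_set f I).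
Proof.
move=> [hI [IL IR]].
have [_ fIL] : left_ideal (image_set f I) by apply: left_ideal_image.
split; [exact: additive_subgroup_image | split => //].
move=> r _ [a ha <-]; have [s <-] := f_surj r.
by exists (a * s); [apply: IR | rewrite rmorphM].
Qed.

Lemma nil_set_image (I : A -> Prop) : nil_set I -> nil_set (image_set f I).
Proof.
move=> Inil _ [a ha <-]; have [n hn] := Inil a ha.
by exists n; rewrite -rmorphXn hn rmorph0.
Qed.

Lemma prime_ideal_preimage (P : C -> Prop) :
  prime_ideal P -> prime_ideal (P \o f).
Proof.
move=> [hP [Pproper Pprime]]; split; first exact: two_sided_ideal_preimage.
split; first exact: proper_set_preimage.
move=> a b hab; apply: Pprime => r; have [s <-] := f_surj r.
by rewrite -!rmorphM; apply: hab.
Qed.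

(* The image of a proper left ideal N containing ker f is proper: if 1 = f x
   with x in N, then 1 - x lies in ker f, hence in N, and so does 1. *)
Lemma proper_set_image (N : A -> Prop) : left_ideal N -> proper_set N ->
  (forall x, f x = 0 -> N x) -> proper_set (image_set f N).
Proof.
move=> [[_ [ND _]] NL] [w hw] Nker; exists 1 => -[x hx fx1]; apply: hw.
have h1x : N (1 - x) by apply: Nker; rewrite rmorphB fx1 rmorph1 subrr.
by rewrite -[w]mulr1 -(subrK x 1); apply/NL/ND.
Qed.

Lemma maximal_left_ideal_preimage (M : C -> Prop) :
  maximal_left_ideal M -> maximal_left_ideal (M \o f).
Proof.
move=> [hM [Mproper Mmax]]; split; first exact: left_ideal_preimage.
split; first exact: proper_set_preimage.
move=> N hN Nproper MN z Nz /=.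
apply: (Mmax (image_set f N)); last by exists z.
- exact: left_ideal_image.
- by apply: proper_set_image => // x fx0; apply: MN; rewrite /= fx0; case: hM => -[].
- by move=> m Mm; have [x fx] := f_surj m; exists x => //; apply: MN; rewrite /= fx.
Qed.

Lemma prime_radical_image x : prime_radical x -> prime_radical (f x).
Proof. by move=> hx P hP; apply: (hx (P \o f)); apply: prime_ideal_preimage. Qed.

Lemma jacobson_radical_image x : jacobson_radical x -> jacobson_radical (f x).
Proof.
by move=> hx M hM; apply: (hx (M \o f)); apply: maximal_left_ideal_preimage.
Qed.

Lemma upper_nilradical_image (JA : A -> Prop) (JC : C -> Prop) :
  is_upper_nilradical JA -> is_upper_nilradical JC ->
  forall x, JA x -> JC (f x).
Proof.
move=> [hJA [JAnil _]] [_ [_ JCmax]] x hx.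
apply: (JCmax (image_set f JA)); last by exists x.
- exact: two_sided_ideal_image.
- exact: nil_set_image.
Qed.

End IdealsAlongMorphisms.

Section InducedEndomorphism.
Variables (A B : pzRingType) (J : A -> Prop).
Variables (phi : {rmorphism A -> A}) (pi : {rmorphism A -> B}).
Hypothesis pi_surj : surjective_fun pi.
Hypothesis pi_ker : forall x, pi x = 0 <-> J x.
Hypothesis phiJ : forall x, J x -> J (phi x).

Let pi_preimage_ex (b : B) : exists a, pi a == b.
Proof. by have [a ha] := pi_surj b; exists a; apply/eqP. Qed.

Definition pi_section (b : B) : A := xchoose (pi_preimage_ex b).

Lemma pi_sectionK b : pi (pi_section b) = b.
Proof. exact/eqP/(xchooseP (pi_preimage_ex b)). Qed.

Definition induced_endo (b : B) : B := pi (phi (pi_section b)).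

Lemma induced_endo_pi a : induced_endo (pi a) = pi (phi a).
Proof.
apply/eqP; rewrite -subr_eq0 -!rmorphB; apply/eqP/pi_ker/phiJ/pi_ker.
by rewrite rmorphB pi_sectionK subrr.
Qed.

Lemma induced_endo_zmod_morphism : zmod_morphism induced_endo.
Proof.
move=> x y; have [a <-] := pi_surj x; have [c <-] := pi_surj y.
by rewrite -rmorphB !induced_endo_pi !rmorphB.
Qed.

Lemma induced_endo_monoid_morphism : monoid_morphism induced_endo.
Proof.
split; first by rewrite -(rmorph1 pi) induced_endo_pi !rmorph1.
move=> x y; have [a <-] := pi_surj x; have [c <-] := pi_surj y.
by rewrite -rmorphM !induced_endo_pi !rmorphM.
Qed.

HB.instance Definition _ :=
  GRing.isZmodMorphism.Build B B induced_endo induced_endo_zmod_morphism.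
HB.instance Definition _ :=
  GRing.isMonoidMorphism.Build B B induced_endo induced_endo_monoid_morphism.

Lemma induced_endo_surj : surjective_fun phi -> surjective_fun induced_endo.
Proof.
move=> phi_surj y; have [a <-] := pi_surj y; have [c <-] := phi_surj a.
by exists (pi c); rewrite induced_endo_pi.
Qed.

Lemma ker_sub_of_hopfian_quotient :
  surjective_fun phi -> hopfian B -> forall x, phi x = 0 -> J x.
Proof.
move=> phi_surj hB x phix0; apply/pi_ker.
apply: (hB induced_endo (induced_endo_surj phi_surj)).
by rewrite /= rmorph0 induced_endo_pi phix0 rmorph0.
Qed.

End InducedEndomorphism.

Theorem mainTheorem9 (A : pzRingType) (J : A -> Prop)
  (hJ : (forall x, J x <-> prime_radical x)
        \/ is_upper_nilradical J
        \/ (forall x, J x <-> jacobson_radical x))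
  (phi : {rmorphism A -> A}) (phi_surj : surjective_fun phi)
  (B : pzRingType) (pi : {rmorphism A -> B}) (pi_surj : surjective_fun pi)
  (pi_ker : forall x, pi x = 0 <-> J x)
  (hB : hopfian B) :
  forall x, phi x = 0 -> J x.
Proof.
have phiJ : forall x, J x -> J (phi x).
  case: hJ => [hJ | [hJ | hJ]] x.
  - by move=> /hJ /(prime_radical_image phi_surj) /hJ.
  - exact: upper_nilradical_image.
  - by move=> /hJ /(jacobson_radical_image phi_surj) /hJ.
exact: (ker_sub_of_hopfian_quotient pi_surj pi_ker phiJ phi_surj hB).
Qed.
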